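(* Let $K,G:[0,\infty)\to\mathbb{R}$ be continuous, let $f$ solve $f''+Kf=0$ with $f>0$ on $(0,\infty)$ and $\int_1^\infty f(t)^{-2}dt<\infty$, and let $m$ solve $m''+Gm=0$ with $m(0)=f(0)$, $m'(0)=f'(0)$. Suppose the support of $G-K$ is contained in a bounded interval $[a,b]\subset[1,\infty)$. If $\alpha(m)<1$, then $m(t)>0$ for all $t\in(0,\infty)$ and $$\int_1^\infty|f(t)^{-2}-m(t)^{-2}|\,dt\le\frac{(2+\alpha(m))\,\alpha(m)}{(1-\alpha(m))^2}\int_a^\infty f(t)^{-2}dt.$$
   Context: Notation: $\sigma(t):=m(t)/f(t)-1$ for $t>0$; $\alpha(m):=\sup_{t>0}|\sigma(t)|$. *)

From Stdlib Require Import Reals Lra.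
Open Scope R_scope.

Definition cont_nonneg (g : R -> R) : Prop :=
  forall t, 0 <= t -> forall eps, 0 < eps -> exists delta, 0 < delta /\
    forall s, 0 <= s -> Rabs (s - t) < delta -> Rabs (g s - g t) < eps.

Definition deriv_nonneg (g : R -> R) (t l : R) : Prop :=
  forall eps, 0 < eps -> exists delta, 0 < delta /\
    forall h, h <> 0 -> 0 <= t + h -> Rabs h < delta ->
      Rabs ((g (t + h) - g t) / h - l) < eps.

Definition solves_ode (k y y' : R -> R) : Prop :=
  forall t, 0 <= t -> deriv_nonneg y t (y' t) /\ deriv_nonneg y' t (- (k t * y t)).

Definition RInt_is (g : R -> R) (a b v : R) : Prop :=
  exists pr : Riemann_integrable g a b, RiemannInt pr = v.

Definition improper_int (g : R -> R) (a L : R) : Prop :=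
  (forall T, a <= T -> exists v, RInt_is g a T v) /\
  (forall eps, 0 < eps -> exists M, forall T v, M <= T -> a <= T ->
      RInt_is g a T v -> Rabs (v - L) < eps).

Definition sigma (m f : R -> R) (t : R) : R := m t / f t - 1.

Definition is_alpha (m f : R -> R) (alpha : R) : Prop :=
  is_lub (fun x => exists t, 0 < t /\ x = Rabs (sigma m f t)) alpha.

From Stdlib Require Import Reals Lra Classical.
Open Scope R_scope.

(* On (0, a] we have G = K, so m and f solve the same linear equation with the
   same initial data and coincide (an energy estimate for m - f); hence the
   integrand |f^-2 - m^-2| vanishes on [1, a].  Elsewhere, writing m = r f with
   |r - 1| <= alpha < 1 gives r > 0 and
     |f^-2 - m^-2| = |r^2 - 1| / r^2 * f^-2 <= (2 + alpha) alpha / (1 - alpha)^2 * f^-2,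
   so the partial integrals of the nonnegative integrand are bounded by that
   constant times int_a^oo f^-2, and their supremum is the improper integral. *)

Definition cont_nonneg_at (g : R -> R) (t : R) : Prop :=
  forall eps, 0 < eps -> exists delta, 0 < delta /\
    forall s, 0 <= s -> Rabs (s - t) < delta -> Rabs (g s - g t) < eps.

(* Stdlib's derivatives and continuity are two-sided on all of R; freezing g
   to the left of 0 makes them usable on [0, oo), including continuity at 0. *)
Definition ext0 (g : R -> R) (x : R) : R := g (Rmax 0 x).

Lemma deriv_nonneg_cont g t l : deriv_nonneg g t l -> cont_nonneg_at g t.
Proof.
  intros Hd eps Heps.
  destruct (Hd 1 Rlt_0_1) as [d [Hd0 Hq]].
  set (B := Rabs l + 1).
  assert (HB : 0 < B) by (unfold B; pose proof (Rabs_pos l); lra).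
  exists (Rmin d (eps / B)); split.
  { apply Rmin_pos; [lra | apply Rdiv_lt_0_compat; lra]. }
  intros s Hs Hst.
  pose proof (Rmin_l d (eps / B)); pose proof (Rmin_r d (eps / B)).
  destruct (Req_dec s t) as [-> | Hne].
  { unfold Rminus; rewrite Rplus_opp_r, Rabs_R0; lra. }
  specialize (Hq (s - t) ltac:(lra)).
  replace (t + (s - t)) with s in Hq by ring.
  specialize (Hq Hs ltac:(lra)).
  set (q := (g s - g t) / (s - t)) in Hq.
  assert (Hq' : Rabs q < B).
  { pose proof (Rabs_triang (q - l) l). replace (q - l + l) with q in * by ring.
    unfold B; lra. }
  replace (g s - g t) with (q * (s - t)) by (unfold q; field; lra).
  rewrite Rabs_mult.
  assert (Hst' : Rabs (s - t) < eps / B) by lra.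
  apply Rle_lt_trans with (B * Rabs (s - t)).
  { apply Rmult_le_compat_r; [apply Rabs_pos | lra]. }
  replace eps with (B * (eps / B)) by (field; lra).
  apply Rmult_lt_compat_l; assumption.
Qed.

Lemma cont_nonneg_at_continuity_pt g t :
  0 < t -> cont_nonneg_at g t -> continuity_pt g t.
Proof.
  intros Ht Hc eps Heps.
  destruct (Hc eps Heps) as [d [Hd Hd']].
  exists (Rmin d t); split; [apply Rmin_pos; lra |].
  intros x [_ Hx]; simpl in *; unfold R_dist in *.
  pose proof (Rmin_l d t); pose proof (Rmin_r d t).
  apply Hd'; [| lra].
  pose proof (Rabs_def2 (x - t) t ltac:(lra)); lra.
Qed.

Lemma solves_ode_continuity_pt k y y' t : solves_ode k y y' -> 0 < t -> continuity_pt y t.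
Proof.
  intros Hy Ht. apply cont_nonneg_at_continuity_pt; [exact Ht |].
  apply (deriv_nonneg_cont y t (y' t)), (Hy t ltac:(lra)).
Qed.

Lemma ext0_continuity_pt g t :
  0 <= t -> cont_nonneg_at g t -> continuity_pt (ext0 g) t.
Proof.
  intros Ht Hc eps Heps.
  destruct (Hc eps Heps) as [d [Hd Hd']].
  exists d; split; [exact Hd |].
  intros x [_ Hx]; simpl in *; unfold R_dist, ext0 in *.
  rewrite (Rmax_right 0 t Ht).
  apply Hd'; [apply Rmax_l |].
  destruct (Rle_dec 0 x).
  - rewrite Rmax_right; auto.
  - rewrite Rmax_left by lra.
    rewrite !Rabs_left1 in * by lra; lra.
Qed.

Lemma ext0_derivable_pt_lim g t l :
  0 < t -> deriv_nonneg g t l -> derivable_pt_lim (ext0 g) t l.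
Proof.
  intros Ht Hd eps Heps.
  destruct (Hd eps Heps) as [d [Hd0 Hd']].
  assert (Hp : 0 < Rmin d t) by (apply Rmin_pos; lra).
  exists (mkposreal _ Hp); intros h Hh Hha; simpl in Hha.
  pose proof (Rmin_l d t); pose proof (Rmin_r d t).
  pose proof (Rabs_def2 h t ltac:(lra)).
  unfold ext0; rewrite (Rmax_right 0 t), (Rmax_right 0 (t + h)) by lra.
  apply Hd'; auto; lra.
Qed.

Lemma nonpos_deriv_nonincreasing (phi dphi : R -> R) a b :
  a < b ->
  (forall c, a <= c <= b -> continuity_pt phi c) ->
  (forall c, a < c < b -> derivable_pt_lim phi c (dphi c)) ->
  (forall c, a < c < b -> dphi c <= 0) ->
  phi b <= phi a.
Proof.
  intros Hab Hc Hd Hneg.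
  assert (pr : forall c, a < c < b -> derivable_pt phi c)
    by (intros c Hc'; exists (dphi c); exact (Hd c Hc')).
  destruct (MVT id phi a b (fun c _ => derivable_pt_id c) pr Hab
              (fun c _ => derivable_continuous_pt _ _ (derivable_pt_id c)) Hc)
    as [c [Hcab Heq]].
  rewrite derive_pt_id, (derive_pt_eq_0 _ _ _ (pr c Hcab) (Hd c Hcab)) in Heq.
  unfold id in Heq.
  pose proof (Hneg c Hcab); nra.
Qed.

Lemma derivable_pt_lim_energy (w v : R -> R) (dw dv C x : R) :
  derivable_pt_lim w x dw -> derivable_pt_lim v x dv ->
  derivable_pt_lim (fun y => (w y ^ 2 + v y ^ 2) * exp (- C * y)) x
    ((2 * w x * dw + 2 * v x * dv - C * (w x ^ 2 + v x ^ 2)) * exp (- C * x)).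
Proof.
  intros Hw Hv.
  assert (Hsq : forall u du, derivable_pt_lim u x du ->
            derivable_pt_lim (fun y => u y ^ 2) x (2 * u x * du)).
  { intros u du Hu.
    assert (H := derivable_pt_lim_comp u (fun z => z ^ 2) x du _ Hu (derivable_pt_lim_pow (u x) 2)).
    replace (2 * u x * du) with (INR 2 * u x ^ Init.Nat.pred 2 * du) by (simpl; ring).
    exact H. }
  assert (He : derivable_pt_lim (fun y => exp (- C * y)) x (- C * exp (- C * x))).
  { assert (Hlin : derivable_pt_lim (fun y => - C * y) x (- C)).
    { assert (H := derivable_pt_lim_scal id (- C) x 1 (derivable_pt_lim_id x)).
      rewrite Rmult_1_r in H; exact H. }
    rewrite Rmult_comm.
    exact (derivable_pt_lim_comp _ exp x _ _ Hlin (derivable_pt_lim_exp (- C * x))). }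
  assert (H := derivable_pt_lim_mult _ _ x _ _ (derivable_pt_lim_plus _ _ x _ _ (Hsq w dw Hw) (Hsq v dv Hv)) He).
  replace ((2 * w x * dw + 2 * v x * dv - C * (w x ^ 2 + v x ^ 2)) * exp (- C * x))
    with ((2 * w x * dw + 2 * v x * dv) * exp (- C * x) + (w x ^ 2 + v x ^ 2) * (- C * exp (- C * x)))
    by ring.
  exact H.
Qed.

Lemma continuity_pt_energy (w v : R -> R) (C x : R) :
  continuity_pt w x -> continuity_pt v x ->
  continuity_pt (fun y => (w y ^ 2 + v y ^ 2) * exp (- C * y)) x.
Proof.
  intros Hw Hv.
  assert (Hsq : forall u, continuity_pt u x -> continuity_pt (fun y => u y ^ 2) x).
  { intros u Hu. apply (continuity_pt_comp u (fun z => z ^ 2)); [exact Hu |].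
    apply derivable_continuous_pt, derivable_pt_pow. }
  assert (He : continuity_pt (fun y => exp (- C * y)) x).
  { apply (continuity_pt_comp (fun y => - C * y) exp).
    - apply continuity_pt_scal, derivable_continuous_pt, derivable_pt_id.
    - apply derivable_continuous_pt, derivable_pt_exp. }
  exact (continuity_pt_mult _ _ x (continuity_pt_plus _ _ x (Hsq w Hw) (Hsq v Hv)) He).
Qed.

Lemma two_mul_le_sum_sq (k C w v : R) :
  Rabs k <= C -> 2 * k * w * v <= C * (w ^ 2 + v ^ 2).
Proof.
  intros Hk.
  pose proof (Rle_abs k); pose proof (Rle_abs (- k)); rewrite Rabs_Ropp in *.
  pose proof (Rle_0_sqr (w - v)); pose proof (Rle_0_sqr (w + v)); unfold Rsqr in *.
  nra.
Qed.

Lemma cont_nonneg_abs_one_sub_bounded (K : R -> R) (t : R) :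
  cont_nonneg K -> 0 <= t -> exists C, forall c, 0 < c < t -> Rabs (1 - K c) <= C.
Proof.
  intros HK Ht.
  assert (HKc : forall c, 0 <= c <= t -> continuity_pt (fun x => Rabs (1 - ext0 K x)) c).
  { intros c Hc. apply (continuity_pt_comp (fun x => 1 - ext0 K x) Rabs).
    - apply continuity_pt_minus; [apply continuity_pt_const; intros u v; reflexivity |].
      apply ext0_continuity_pt; [lra |]. intros e He; apply (HK c); lra.
    - apply Rcontinuity_abs. }
  destruct (continuity_ab_maj _ 0 t Ht HKc) as [c0 [Hmax _]].
  exists (Rabs (1 - ext0 K c0)); intros c Hc.
  specialize (Hmax c ltac:(lra)).
  unfold ext0 in Hmax; rewrite Rmax_right in Hmax by lra. exact Hmax.
Qed.

Lemma ode_solutions_agree (K G f f' m m' : R -> R) (t : R) :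
  cont_nonneg K -> solves_ode K f f' -> solves_ode G m m' ->
  m 0 = f 0 -> m' 0 = f' 0 -> 0 < t ->
  (forall s, 0 <= s < t -> G s = K s) ->
  m t = f t.
Proof.
  intros HK Hf Hm H0 H0' Ht HGK.
  destruct (cont_nonneg_abs_one_sub_bounded K t HK (Rlt_le _ _ Ht)) as [C HC].
  (* phi' = (2 (1 - K) w v - C (w^2 + v^2)) e^(-C y) <= 0 on (0, t), where G = K. *)
  set (w := fun x => ext0 m x - ext0 f x).
  set (v := fun x => ext0 m' x - ext0 f' x).
  set (phi := fun y => (w y ^ 2 + v y ^ 2) * exp (- C * y)).
  set (dphi := fun c => (2 * w c * (m' c - f' c) + 2 * v c * (- (G c * m c) - - (K c * f c))
                        - C * (w c ^ 2 + v c ^ 2)) * exp (- C * c)).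
  assert (Hphi : phi t <= phi 0).
  { apply (nonpos_deriv_nonincreasing phi dphi 0 t Ht).
    - intros c Hc. destruct (Hf c ltac:(lra)) as [Df Df']; destruct (Hm c ltac:(lra)) as [Dm Dm'].
      apply continuity_pt_energy; apply continuity_pt_minus;
        apply ext0_continuity_pt; try lra; eapply deriv_nonneg_cont; eassumption.
    - intros c Hc. destruct (Hf c ltac:(lra)) as [Df Df']; destruct (Hm c ltac:(lra)) as [Dm Dm'].
      apply ext0_derivable_pt_lim in Df, Df', Dm, Dm'; try lra.
      exact (derivable_pt_lim_energy w v _ _ C c
               (derivable_pt_lim_minus _ _ c _ _ Dm Df) (derivable_pt_lim_minus _ _ c _ _ Dm' Df')).
    - intros c Hc. unfold dphi, v, w, ext0.
      rewrite (HGK c) by lra; rewrite (Rmax_right 0 c) by lra.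
      pose proof (two_mul_le_sum_sq (1 - K c) C (m c - f c) (m' c - f' c) (HC c Hc)).
      pose proof (exp_pos (- C * c)).
      rewrite <- (Rmult_0_l (exp (- C * c))); apply Rmult_le_compat_r; [lra | nra]. }
  assert (Hphi0 : phi 0 = 0).
  { unfold phi, v, w, ext0. rewrite Rmax_left by lra. rewrite H0, H0'. ring. }
  unfold phi, v, w, ext0 in Hphi, Hphi0; rewrite Hphi0, (Rmax_right 0 t) in Hphi by lra.
  pose proof (exp_pos (- C * t)).
  pose proof (pow2_ge_0 (m t - f t)); pose proof (pow2_ge_0 (m' t - f' t)).
  assert (Hsq : (m t - f t) ^ 2 = 0) by nra.
  destruct (Req_dec (m t) (f t)) as [| Hne]; [assumption |].
  exfalso; apply (pow_nonzero (m t - f t) 2); lra.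
Qed.

Lemma pos_of_ratio_near_one x y alpha :
  0 < x -> Rabs (y / x - 1) <= alpha -> alpha < 1 -> 0 < y.
Proof.
  intros Hx Hr Hal.
  pose proof (Rle_abs (- (y / x - 1))); rewrite Rabs_Ropp in *.
  replace y with (y / x * x) by (field; lra).
  apply Rmult_lt_0_compat; lra.
Qed.

Lemma inv_sqr_sub_bound x y alpha :
  0 < x -> Rabs (y / x - 1) <= alpha -> alpha < 1 ->
  Rabs (/ x ^ 2 - / y ^ 2) <= (2 + alpha) * alpha / (1 - alpha) ^ 2 * / x ^ 2.
Proof.
  intros Hx Hr Hal.
  set (r := y / x) in Hr.
  pose proof (Rle_abs (r - 1)); pose proof (Rle_abs (- (r - 1))); rewrite Rabs_Ropp in *.
  assert (Hr0 : 0 < r) by lra.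
  assert (Hx2 : 0 < / x ^ 2) by (apply Rinv_0_lt_compat; nra).
  replace y with (r * x) by (unfold r; field; lra).
  replace (/ x ^ 2 - / (r * x) ^ 2) with ((r - 1) * (r + 1) / r ^ 2 * / x ^ 2)
    by (field; lra).
  rewrite Rabs_mult, (Rabs_right (/ x ^ 2)) by lra.
  apply Rmult_le_compat_r; [lra |].
  unfold Rdiv; rewrite !Rabs_mult, (Rabs_right (r + 1)), (Rabs_right (/ r ^ 2))
    by (try apply Rle_ge, Rlt_le, Rinv_0_lt_compat; nra).
  apply Rmult_le_compat; [nra | apply Rlt_le, Rinv_0_lt_compat; nra | nra |].
  apply Rinv_le_contravar; nra.
Qed.

Lemma RInt_is_unique g x y v1 v2 : RInt_is g x y v1 -> RInt_is g x y v2 -> v1 = v2.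
Proof. intros [p1 <-] [p2 <-]. apply RiemannInt_P5. Qed.

Lemma RInt_is_split g x y z v : RInt_is g x z v -> x <= y <= z ->
  exists v1 v2, RInt_is g x y v1 /\ RInt_is g y z v2 /\ v1 + v2 = v.
Proof.
  intros [p <-] Hy.
  exists (RiemannInt (RiemannInt_P22 p Hy)), (RiemannInt (RiemannInt_P23 p Hy)).
  split; [eexists; reflexivity |]; split; [eexists; reflexivity |].
  apply RiemannInt_P26.
Qed.

Lemma RInt_is_refl g x : RInt_is g x x 0.
Proof. exists (RiemannInt_P7 g x). apply RiemannInt_P9. Qed.

Lemma RInt_is_const c x y : RInt_is (fct_cte c) x y (c * (y - x)).
Proof. exists (RiemannInt_P14 x y c). apply RiemannInt_P15. Qed.

Lemma RInt_is_scal g x y v C : x <= y ->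
  RInt_is g x y v -> RInt_is (fun t => C * g t) x y (C * v).
Proof.
  intros Hxy [p <-].
  set (p0 := RiemannInt_P14 x y 0).
  exists (@Riemann_integrable_scal g x y C p).
  rewrite (RiemannInt_P18 _ (RiemannInt_P10 C p0 p) Hxy)
    by (intros t _; unfold fct_cte; ring).
  rewrite (RiemannInt_P13 p0 p), RiemannInt_P15; ring.
Qed.

Lemma RInt_is_continuous g x y : x <= y ->
  (forall t, x <= t <= y -> continuity_pt g t) -> exists v, RInt_is g x y v.
Proof.
  intros Hxy Hc. exists (RiemannInt (continuity_implies_RiemannInt Hxy Hc)).
  eexists; reflexivity.
Qed.

Lemma RInt_is_le g1 g2 x y v1 v2 : x <= y -> (forall t, x < t < y -> g1 t <= g2 t) ->
  RInt_is g1 x y v1 -> RInt_is g2 x y v2 -> v1 <= v2.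
Proof. intros Hxy H [p1 <-] [p2 <-]. apply RiemannInt_P19; assumption. Qed.

Lemma RInt_is_ge0 g x y v : x <= y -> (forall t, x < t < y -> 0 <= g t) ->
  RInt_is g x y v -> 0 <= v.
Proof.
  intros Hxy H Hv. replace 0 with (0 * (y - x)) by ring.
  apply (RInt_is_le (fct_cte 0) g x y); [assumption | exact H | apply RInt_is_const | exact Hv].
Qed.

Lemma RInt_is_eq0 g x y v : x <= y -> (forall t, x < t < y -> g t = 0) ->
  RInt_is g x y v -> v = 0.
Proof.
  intros Hxy H Hv. apply Rle_antisym.
  - replace 0 with (0 * (y - x)) by ring.
    apply (RInt_is_le g (fct_cte 0) x y); [assumption | | exact Hv | apply RInt_is_const].
    intros t Ht; rewrite H by assumption; unfold fct_cte; lra.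
  - apply (RInt_is_ge0 g x y); [assumption | | exact Hv].
    intros t Ht; rewrite H by assumption; lra.
Qed.

Lemma improper_int_tail h x a I v : x <= a ->
  improper_int h x I -> RInt_is h x a v -> improper_int h a (I - v).
Proof.
  intros Hxa [Hex Hlim] Hv. split.
  - intros T HT. destruct (Hex T ltac:(lra)) as [w Hw].
    destruct (RInt_is_split _ _ _ _ _ Hw (conj Hxa HT)) as [w1 [w2 [_ [Hw2 _]]]].
    exists w2; exact Hw2.
  - intros eps Heps. destruct (Hlim eps Heps) as [M HM]. exists M.
    intros T w HMT HaT Hw. destruct (Hex T ltac:(lra)) as [u Hu].
    destruct (RInt_is_split _ _ _ _ _ Hu (conj Hxa HaT)) as [u1 [u2 [Hu1 [Hu2 Hsum]]]].
    rewrite (RInt_is_unique _ _ _ _ _ Hu1 Hv), (RInt_is_unique _ _ _ _ _ Hu2 Hw) in Hsum.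
    replace (w - (I - v)) with (u - I) by lra.
    apply (HM T u HMT ltac:(lra) Hu).
Qed.

Lemma RInt_is_le_improper h a T v L : (forall t, a < t -> 0 <= h t) ->
  improper_int h a L -> a <= T -> RInt_is h a T v -> v <= L.
Proof.
  intros Hh [Hex Hlim] HaT Hv.
  destruct (Rle_dec v L) as [| Hn]; [assumption | exfalso].
  destruct (Hlim (v - L) ltac:(lra)) as [M HM].
  pose proof (Rmax_l M T) as HMT'; pose proof (Rmax_r M T) as HTT'; set (T' := Rmax M T) in *.
  destruct (Hex T' ltac:(lra)) as [u Hu].
  destruct (RInt_is_split _ _ _ _ _ Hu (conj HaT HTT')) as [u1 [u2 [Hu1 [Hu2 Hsum]]]].
  rewrite (RInt_is_unique _ _ _ _ _ Hu1 Hv) in Hsum.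
  assert (0 <= u2) by (apply (RInt_is_ge0 h T T'); [lra | intros t Ht; apply Hh; lra | exact Hu2]).
  specialize (HM T' u HMT' ltac:(lra) Hu).
  pose proof (Rle_abs (u - L)); lra.
Qed.

Lemma improper_int_of_bounded g x B : (forall t, x < t -> 0 <= g t) ->
  (forall T, x <= T -> exists v, RInt_is g x T v) ->
  (forall T v, x <= T -> RInt_is g x T v -> v <= B) ->
  exists L, improper_int g x L /\ L <= B.
Proof.
  intros Hg Hex Hbd.
  set (S := fun v => exists T, x <= T /\ RInt_is g x T v).
  destruct (completeness S) as [L [Hub Hlub]].
  - exists B; intros v [T [HT Hv]]; exact (Hbd T v HT Hv).
  - exists 0, x; split; [lra | apply RInt_is_refl].
  - exists L; split; [split; [exact Hex |] | apply Hlub; intros v [T [HT Hv]]; exact (Hbd T v HT Hv)].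
    intros eps Heps.
    destruct (not_all_not_ex _ (fun v => S v /\ L - eps < v)) as [v0 [[T0 [HT0 Hv0]] Hv0L]].
    { intros Hn. assert (L <= L - eps) by (apply Hlub; intros v Hv;
        apply Rnot_lt_le; intros Hlt; exact (Hn v (conj Hv Hlt))). lra. }
    exists T0; intros T v HT _ Hv.
    destruct (RInt_is_split _ _ _ _ _ Hv (conj HT0 HT)) as [v1 [v2 [Hv1 [Hv2 Hsum]]]].
    rewrite (RInt_is_unique _ _ _ _ _ Hv1 Hv0) in Hsum.
    assert (0 <= v2) by (apply (RInt_is_ge0 g T0 T); [lra | intros t Ht; apply Hg; lra | exact Hv2]).
    assert (v <= L) by (apply Hub; exists T; split; [lra | exact Hv]).
    rewrite Rabs_left1; lra.
Qed.

Lemma RInt_is_le_scaled_tail g h x a La C T v :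
  x <= a -> 0 <= C ->
  (forall t, x < t < a -> g t = 0) ->
  (forall t, a < t -> 0 <= h t) ->
  (forall t, a < t -> g t <= C * h t) ->
  improper_int h a La -> x <= T -> RInt_is g x T v -> v <= C * La.
Proof.
  intros Hxa HC Hg0 Hh Hgh HLa HT Hv.
  assert (HLa0 : 0 <= La) by exact (RInt_is_le_improper h a a 0 La Hh HLa (Rle_refl a) (RInt_is_refl h a)).
  destruct (Rle_dec T a) as [HTa | HTa].
  - rewrite (RInt_is_eq0 g x T v HT (fun t Ht => Hg0 t ltac:(lra)) Hv); nra.
  - destruct (RInt_is_split _ _ _ _ _ Hv (conj Hxa (Rlt_le _ _ (Rnot_le_lt _ _ HTa))))
      as [v1 [v2 [Hv1 [Hv2 Hsum]]]].
    rewrite (RInt_is_eq0 g x a v1 Hxa Hg0 Hv1) in Hsum.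
    destruct (proj1 HLa T ltac:(lra)) as [w Hw].
    assert (v2 <= C * w).
    { apply (RInt_is_le g (fun t => C * h t) a T); [lra | intros t Ht; apply Hgh; lra | exact Hv2 |].
      apply RInt_is_scal; [lra | exact Hw]. }
    pose proof (RInt_is_le_improper h a T w La Hh HLa ltac:(lra) Hw). nra.
Qed.

Lemma continuity_pt_abs_inv_sqr_sub f m t :
  continuity_pt f t -> continuity_pt m t -> f t <> 0 -> m t <> 0 ->
  continuity_pt (fun x => Rabs (/ f x ^ 2 - / m x ^ 2)) t.
Proof.
  intros Hf Hm Hf0 Hm0.
  assert (Hinv : forall u, continuity_pt u t -> u t <> 0 -> continuity_pt (fun x => / u x ^ 2) t).
  { intros u Hu Hu0. apply (continuity_pt_inv (fun x => u x ^ 2)); [| apply pow_nonzero; exact Hu0].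
    apply (continuity_pt_comp u (fun z => z ^ 2)); [exact Hu |].
    apply derivable_continuous_pt, derivable_pt_pow. }
  apply (continuity_pt_comp (fun x => / f x ^ 2 - / m x ^ 2) Rabs); [| apply Rcontinuity_abs].
  exact (continuity_pt_minus _ _ t (Hinv f Hf Hf0) (Hinv m Hm Hm0)).
Qed.

Theorem lemma2p5 (K G f f' m m' : R -> R) (a b alpha : R) :
  cont_nonneg K -> cont_nonneg G ->
  solves_ode K f f' ->
  (forall t, 0 < t -> 0 < f t) ->
  (exists I, improper_int (fun t => / (f t) ^ 2) 1 I) ->
  solves_ode G m m' ->
  m 0 = f 0 -> m' 0 = f' 0 ->
  1 <= a -> a <= b ->
  (forall t, 0 <= t -> (t < a \/ b < t) -> G t = K t) ->
  is_alpha m f alpha -> alpha < 1 ->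
  (forall t, 0 < t -> 0 < m t) /\
  exists L La,
    improper_int (fun t => Rabs (/ (f t) ^ 2 - / (m t) ^ 2)) 1 L /\
    improper_int (fun t => / (f t) ^ 2) a La /\
    L <= (2 + alpha) * alpha / (1 - alpha) ^ 2 * La.
Proof.
  intros HK _ Hf Hfpos [I HI] Hm H0 H0' H1a _ HGK [Hub _] Hal.
  assert (Hsig : forall t, 0 < t -> Rabs (m t / f t - 1) <= alpha)
    by (intros t Ht; apply Hub; exists t; split; [exact Ht | reflexivity]).
  assert (Ha0 : 0 <= alpha) by (pose proof (Hsig 1 Rlt_0_1); pose proof (Rabs_pos (m 1 / f 1 - 1)); lra).
  assert (Hmpos : forall t, 0 < t -> 0 < m t)
    by (intros t Ht; exact (pos_of_ratio_near_one _ _ _ (Hfpos t Ht) (Hsig t Ht) Hal)).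
  split; [exact Hmpos |].
  set (C := (2 + alpha) * alpha / (1 - alpha) ^ 2).
  assert (HC : 0 <= C) by (unfold C; apply Rmult_le_pos; [nra | apply Rlt_le, Rinv_0_lt_compat; nra]).
  destruct (proj1 HI a H1a) as [v1a Hv1a].
  pose proof (improper_int_tail _ 1 a I v1a H1a HI Hv1a) as HLa.
  assert (Hagree : forall t, 0 < t -> t <= a -> m t = f t)
    by (intros t Ht Hta; apply (ode_solutions_agree K G f f' m m' t HK Hf Hm H0 H0' Ht);
        intros s Hs; apply HGK; lra).
  set (g := fun t => Rabs (/ f t ^ 2 - / m t ^ 2)).
  destruct (improper_int_of_bounded g 1 (C * (I - v1a)))
    as [L [HL HLbound]].
  - intros t _; apply Rabs_pos.
  - intros T HT; apply RInt_is_continuous; [exact HT |]; intros t Ht.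
    apply continuity_pt_abs_inv_sqr_sub.
    + exact (solves_ode_continuity_pt _ _ _ t Hf ltac:(lra)).
    + exact (solves_ode_continuity_pt _ _ _ t Hm ltac:(lra)).
    + apply Rgt_not_eq, Hfpos; lra.
    + apply Rgt_not_eq, Hmpos; lra.
  - intros T v HT Hv.
    apply (RInt_is_le_scaled_tail g (fun t => / f t ^ 2) 1 a _ C T v H1a HC); try assumption.
    + intros t Ht; unfold g; rewrite Hagree by lra; unfold Rminus; rewrite Rplus_opp_r; apply Rabs_R0.
    + intros t Ht; pose proof (Hfpos t ltac:(lra)); apply Rlt_le, Rinv_0_lt_compat; nra.
    + intros t Ht; apply inv_sqr_sub_bound; [apply Hfpos; lra | apply Hsig; lra | exact Hal].
  - exists L, (I - v1a); split; [exact HL | split; [exact HLa | exact HLbound]].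
Qed.
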